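(* Let $p,q$ be distinct primes, $m>1$ an integer, and $S=\{p^kq^l: 0\le k,l\le m-1\}$ (so $|S|=m^2$). Then $i_-([S])=2m-2$ and $i_+([S])=(m-1)^2+1$; in particular $i_+([S])/|S|\to 1$ as $m\to\infty$.
   Context: The LCM matrix $[S]$ of $S=\{x_1,\dots,x_n\}$ has $(i,j)$ entry $\mathrm{lcm}(x_i,x_j)$; $i_+(M)$ and $i_-(M)$ denote the numbers of positive and negative eigenvalues (with multiplicity) of a real symmetric matrix $M$. *)

From HB Require Import structures.
From mathcomp Require Import all_boot all_order all_algebra all_field.
Set Implicit Arguments. Unset Strict Implicit. Unset Printing Implicit Defensive.
Import Order.TTheory GRing.Theory Num.Theory.
Local Open Scope ring_scope.

(* Eigenvalues (with multiplicity) of a square matrix over the algebraic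
   complex numbers algC: the roots of its (monic) characteristic polynomial,
   listed with multiplicity.  The multiset is unique up to permutation. *)
Definition eigvals (n : nat) (M : 'M[algC]_n) : seq algC :=
  sval (closed_field_poly_normal (char_poly M)).

(* i_+(M), i_-(M): numbers of positive / negative eigenvalues with
   multiplicity.  In algC, 0 < z means z is a positive real number. *)
Definition i_plus (n : nat) (M : 'M[algC]_n) : nat :=
  count (fun z : algC => 0 < z) (eigvals M).
Definition i_minus (n : nat) (M : 'M[algC]_n) : nat :=
  count (fun z : algC => z < 0) (eigvals M).

Definition lcm_mx (x : seq nat) : 'M[algC]_(size x) :=
  \matrix_(i < size x, j < size x) (lcmn (nth 0%N x i) (nth 0%N x j))%:R.

Definition Spq (p q m : nat) : seq nat :=
  [seq (p ^ k * q ^ l)%N | k <- iota 0 m, l <- iota 0 m].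

(* Index S by exponent pairs (k, l) in [0, m)^2.  Then [S] = W^* D W, where W
   is the 0/1 zeta matrix of the componentwise order on pairs (unitriangular,
   hence invertible) and D is diagonal with D(k,l) = w_p(k) w_q(l); the weights
   w_x(t) = x^t - x^(t+1) for t < m-1 and w_x(m-1) = x^(m-1) are chosen so that
   x^(max a c) is the sum of the w_x(t) over t >= a, c.  By Sylvester's law of
   inertia, [S] has as many negative (positive) eigenvalues as D has negative
   (positive) diagonal entries.  As w_x(t) < 0 exactly when t < m-1, D(k,l) is
   negative iff exactly one of k, l equals m-1, i.e. for 2(m-1) pairs, and the
   remaining (m-1)^2 + 1 entries are positive. *)

From HB Require Import structures.
From mathcomp Require Import all_boot all_order all_algebra all_field.
From mathcomp Require Import ring zify.
Set Implicit Arguments. Unset Strict Implicit. Unset Printing Implicit Defensive.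
Import Order.TTheory GRing.Theory Num.Theory.

Lemma big_nat_divmod (R : Type) (idx : R) (op : Monoid.law idx) m n
    (F : nat -> nat -> R) : 0 < n ->
  \big[op/idx]_(0 <= r < m * n) F (r %/ n) (r %% n) =
  \big[op/idx]_(a < m) \big[op/idx]_(b < n) F a b.
Proof.
move=> n0; elim: m => [|m IHm]; first by rewrite mul0n big_ord0 big_geq.
rewrite mulSn addnC (@big_cat_nat _ _ _ (m * n)) ?leq_addr //= IHm big_ord_recr /=.
congr (op _ _); rewrite -{1}(add0n (m * n)) big_addn addKn big_mkord.
apply: eq_bigr => b _.
by rewrite addnC divnMDl // modnMDl divn_small // modn_small // addn0.
Qed.

Lemma size_Spq p q m : size (Spq p q m) = m * m.
Proof. by rewrite size_allpairs size_iota. Qed.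

Lemma nth_allpairs (S T U : Type) (x0 : S) (y0 : T) (z0 : U) (f : S -> T -> U)
    (s : seq S) (t : seq T) i :
  i < size s * size t ->
  nth z0 [seq f x y | x <- s, y <- t] i =
  f (nth x0 s (i %/ size t)) (nth y0 t (i %% size t)).
Proof.
elim: s i => [|x s IHs] i //; rewrite allpairs_cons nth_cat size_map mulSn => lti.
have t0 : 0 < size t by case: (size t) lti => //; rewrite muln0.
case: ltnP => [it|ti]; first by rewrite (nth_map y0) // divn_small // modn_small.
rewrite IHs; last by rewrite -(ltn_add2l (size t)) subnKC.
have -> : i = 1 * size t + (i - size t) by rewrite mul1n subnKC.
by rewrite divnMDl // modnMDl mul1n addKn add1n.
Qed.

Lemma nth_Spq p q m i : i < m * m ->
  nth 0 (Spq p q m) i = p ^ (i %/ m) * q ^ (i %% m).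
Proof.
move=> lti; have m0 : 0 < m by case: m lti.
by rewrite (nth_allpairs 0 0) ?size_iota // !nth_iota ?ltn_pmod ?ltn_divLR.
Qed.

Lemma lcmn_pq_pow p q a b c d : prime p -> prime q -> p != q ->
  lcmn (p ^ a * q ^ b) (p ^ c * q ^ d) = p ^ maxn a c * q ^ maxn b d.
Proof.
move=> pp qp pq; have cop : coprime (p ^ maxn a c) (q ^ maxn b d).
  by rewrite coprimeXl // coprimeXr // prime_coprime // dvdn_prime2.
apply/eqP; rewrite eqn_dvd dvdn_lcm (Gauss_dvd _ cop).
rewrite !dvdn_mul ?dvdn_exp2l ?leq_maxl ?leq_maxr //= !expn_max !dvdn_lcm.
by rewrite !(dvdn_trans (dvdn_mulr _ (dvdnn _)) (dvdn_lcml _ _),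
            dvdn_trans (dvdn_mulr _ (dvdnn _)) (dvdn_lcmr _ _),
            dvdn_trans (dvdn_mull _ (dvdnn _)) (dvdn_lcml _ _),
            dvdn_trans (dvdn_mull _ (dvdnn _)) (dvdn_lcmr _ _)).
Qed.

Lemma logn_pq_pow p q a b : prime p -> prime q -> p != q ->
  logn p (p ^ a * q ^ b) = a.
Proof.
move=> pp qp pq; rewrite lognM ?expn_gt0 ?prime_gt0 // pfactorK //.
by rewrite logn_coprime ?addn0 // coprimeXr // prime_coprime // dvdn_prime2.
Qed.

Lemma uniq_Spq p q m : prime p -> prime q -> p != q -> uniq (Spq p q m).
Proof.
move=> pp qp pq; apply: allpairs_uniq => [||[a b] [c d] _ _ /= E]; rewrite ?iota_uniq //.
have qp' : q != p by rewrite eq_sym.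
congr pair; first by rewrite -(logn_pq_pow a b pp qp pq) E logn_pq_pow.
by rewrite -(logn_pq_pow b a qp pp qp') mulnC E mulnC logn_pq_pow.
Qed.

Lemma card_set_count (T : finType) (P : pred T) : #|[set i | P i]| = count P (enum T).
Proof. by rewrite cardsE cardE enumT -size_filter. Qed.

Lemma card_set_sum (T : finType) (P : pred T) : #|[set i | P i]| = \sum_i P i.
Proof.
by rewrite -sum1_card big_mkcond; apply: eq_bigr => i _; rewrite inE; case: (P i).
Qed.

Lemma sum_xor_ltn k :
  \sum_(a < k.+1) \sum_(b < k.+1) ((a < k) (+) (b < k) : nat) = 2 * k.
Proof.
have inner (c : bool) : \sum_(b < k.+1) (c (+) (b < k) : nat) = if c then 1 else k.
  rewrite big_ord_recr /= ltnn addbF (eq_bigr (fun=> (~~ c : nat))) => [|b _]; last first.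
    by rewrite /= ltn_ord addbT.
  by rewrite sum_nat_const card_ord; case: c; rewrite ?muln0 ?muln1 ?addn0.
rewrite big_ord_recr /= ltnn inner (eq_bigr (fun=> 1)) => [|a _]; last first.
  by rewrite /= ltn_ord inner.
by rewrite sum_nat_const card_ord muln1 mul2n -addnn.
Qed.

Local Open Scope ring_scope.
Local Open Scope sesquilinear_scope.

Lemma trmxC_mul m n p (A : 'M[algC]_(m, n)) (B : 'M[algC]_(n, p)) :
  (A *m B) ^t* = B ^t* *m A ^t*.
Proof. by rewrite trmx_mul map_mxM. Qed.

Lemma hform_congr n (x : 'rV[algC]_n) (V D : 'M[algC]_n) :
  x *m (V ^t* *m D *m V) *m x ^t* = (x *m V ^t*) *m D *m (x *m V ^t*) ^t*.
Proof. by rewrite trmxC_mul trmxCK !mulmxA. Qed.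

Lemma diag_hformE n (y e : 'rV[algC]_n) :
  (y *m diag_mx e *m y ^t*) 0 0 = \sum_i e 0 i * `|y 0 i| ^+ 2.
Proof.
rewrite mul_mx_diag mxE; apply: eq_bigr => i _.
by rewrite !mxE normCK mulrAC mulrC.
Qed.

Lemma diag_hform_lt0 n (y e : 'rV[algC]_n) : y != 0 ->
  (forall i, ~~ (e 0 i < 0) -> y 0 i = 0) -> (y *m diag_mx e *m y ^t*) 0 0 < 0.
Proof.
move=> /rV0Pn[j yj0] ye; rewrite diag_hformE (bigD1 j) //=.
have ej : e 0 j < 0 by apply: contraNT yj0 => /ye ->.
rewrite -[X in _ < X](addr0 0) ltr_leD ?nmulr_rlt0 ?exprn_gt0 ?normr_gt0 //.
apply: sumr_le0 => i _; have [ei|/ye->] := boolP (e 0 i < 0).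
  by rewrite nmulr_rle0 ?exprn_ge0.
by rewrite normr0 expr0n mulr0.
Qed.

Lemma diag_hform_ge0 n (y e : 'rV[algC]_n) : (forall i, e 0 i \is Num.real) ->
  (forall i, e 0 i < 0 -> y 0 i = 0) -> 0 <= (y *m diag_mx e *m y ^t*) 0 0.
Proof.
move=> er ye; rewrite diag_hformE; apply: sumr_ge0 => i _.
have [/ye->|] := boolP (e 0 i < 0); first by rewrite normr0 expr0n mulr0.
by rewrite -real_leNgt ?real0 // => ei; rewrite mulr_ge0 ?exprn_ge0.
Qed.

Lemma nontrivial_left_kernel (F : fieldType) m n (K : 'M[F]_(m, n)) : (n < m)%N ->
  exists2 v : 'rV_m, v != 0 & v *m K = 0.
Proof.
move=> nm; have : kermx K != 0.
  rewrite -mxrank_eq0 mxrank_ker subn_eq0 -ltnNge.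
  exact: leq_ltn_trans (rank_leq_col K) nm.
by case/rowV0Pn=> v /sub_kermxP vK v0; exists v.
Qed.

Lemma card_neg_diag_le n (A V1 V2 : 'M[algC]_n) (e1 e2 : 'rV[algC]_n) :
  V1 \in unitmx -> (forall i, e2 0 i \is Num.real) ->
  A = V1 ^t* *m diag_mx e1 *m V1 -> A = V2 ^t* *m diag_mx e2 *m V2 ->
  (#|[set i | (e1 0 i < 0)%R]| <= #|[set i | (e2 0 i < 0)%R]|)%N.
Proof.
move=> V1u e2r A1 A2; set N1 := [set i | _]; set N2 := [set i | _].
(* Otherwise some nonzero x has x V1^* supported where e1 < 0 and x V2^*
   vanishing where e2 < 0, so that x A x^* is both < 0 and >= 0. *)
rewrite leqNgt; apply/negP => N21.
pose f1 : 'I_#|N1| -> 'I_n := enum_val; pose f2 : 'I_#|N2| -> 'I_n := enum_val.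
pose W := invmx (V1 ^t*).
have [c c0 cK] := nontrivial_left_kernel (colsub f2 (rowsub f1 W *m V2 ^t*)) N21.
pose x := c *m rowsub f1 W.
have neg : (x *m A *m x ^t*) 0 0 < 0.
  have xV1 : x *m V1 ^t* = c *m rowsub f1 1%:M.
    by rewrite -mulmxA mul_rowsub_mx mulVmx // map_unitmx unitmx_tr.
  have xV1E i : (x *m V1 ^t*) 0 i = \sum_j c 0 j * (f1 j == i)%:R.
    by rewrite xV1 mxE; apply: eq_bigr => j _; rewrite !mxE.
  rewrite A1 hform_congr; apply: diag_hform_lt0 => [|i e1i].
    have [j cj] := rV0Pn _ c0; apply/rV0Pn; exists (f1 j).
    rewrite xV1E (bigD1 j) //= big1 ?eqxx ?mulr1 ?addr0 // => k kj.
    by rewrite (inj_eq enum_val_inj) (negbTE kj) mulr0.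
  rewrite xV1E big1 // => j _; suff /negbTE-> : f1 j != i by rewrite mulr0.
  by apply: contraNneq e1i => <-; have := enum_valP j; rewrite inE.
have pos : 0 <= (x *m A *m x ^t*) 0 0.
  rewrite A2 hform_congr; apply: diag_hform_ge0 => // k e2k.
  have kN2 : k \in N2 by rewrite inE.
  have := congr1 (fun M : 'rV[algC]_#|N2| => M 0 (enum_rank_in kN2 k)) cK.
  by rewrite mulmx_colsub mulmxA mxE /f2 enum_rankK_in // mxE => ->; rewrite mxE.
by have := lt_le_trans neg pos; rewrite ltxx.
Qed.

Lemma card_neg_diag_eq n (A V1 V2 : 'M[algC]_n) (e1 e2 : 'rV[algC]_n) :
  V1 \in unitmx -> V2 \in unitmx ->
  (forall i, e1 0 i \is Num.real) -> (forall i, e2 0 i \is Num.real) ->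
  A = V1 ^t* *m diag_mx e1 *m V1 -> A = V2 ^t* *m diag_mx e2 *m V2 ->
  #|[set i | e1 0 i < 0]| = #|[set i | e2 0 i < 0]|.
Proof.
move=> V1u V2u e1r e2r A1 A2; apply/eqP; rewrite eqn_leq.
by rewrite (card_neg_diag_le V1u e2r A1 A2) (card_neg_diag_le V2u e1r A2 A1).
Qed.

Lemma char_poly_similar (R : comUnitRingType) n (P D : 'M[R]_n) : P \in unitmx ->
  char_poly (invmx P *m D *m P) = char_poly D.
Proof.
move=> Pu; rewrite /char_poly; set P' := map_mx polyC P; set Pi := map_mx polyC (invmx P).
have PiP : Pi *m P' = 1%:M by rewrite -map_mxM mulVmx // map_mx1.
have PPi : P' *m Pi = 1%:M by rewrite -map_mxM mulmxV // map_mx1.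
have -> : char_poly_mx (invmx P *m D *m P) = Pi *m char_poly_mx D *m P'.
  rewrite /char_poly_mx !map_mxM mulmxBr mulmxBl scalar_mxC.
  by rewrite -(mulmxA _ Pi) PiP mulmx1.
by rewrite !det_mulmx mulrC mulrA -det_mulmx PPi det1 mul1r.
Qed.

Lemma count_eigvals_similar n (A P : 'M[algC]_n) (d : 'rV[algC]_n) (f : pred algC) :
  P \in unitmx -> A = invmx P *m diag_mx d *m P ->
  count f (eigvals A) = #|[set i | f (d 0 i)]|.
Proof.
move=> Pu AE; rewrite card_set_count -(count_map (fun i => d 0 i)).
apply/permP/prod_XsubC_eq.
have := svalP (closed_field_poly_normal (char_poly A)).
rewrite -/(eigvals A) (monicP (char_poly_monic A)) scale1r => <-.
rewrite AE char_poly_similar // char_poly_trig ?diag_mx_is_trig // big_map big_enum.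
by apply: eq_bigr => i _; rewrite mxE eqxx mulr1n.
Qed.

Theorem inertia_hermitian n (A V : 'M[algC]_n) (e : 'rV[algC]_n) :
  A \is hermsymmx -> V \in unitmx -> (forall i, e 0 i \is Num.real) ->
  A = V ^t* *m diag_mx e *m V ->
  i_minus A = #|[set i | e 0 i < 0]| /\ i_plus A = #|[set i | 0 < e 0 i]|.
Proof.
(* The spectral decomposition is another such factorization of A, with the
   eigenvalues on the diagonal; compare the two for A and for -A. *)
move=> Ah Vu er AV; set P := spectralmx A; set d := spectral_diag A.
have AE : A = invmx P *m diag_mx d *m P := orthomx_spectralP (hermitian_normalmx Ah).
have Pu : P \in unitmx := spectral_unit A.
have AP : A = P ^t* *m diag_mx d *m P by rewrite AE invmx_unitary ?spectral_unitarymx.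
have dr i : d 0 i \is Num.real by have /mxOverP := hermitian_spectral_diag_real Ah; apply.
have opp_real (x : 'rV[algC]_n) :
    (forall i, x 0 i \is Num.real) -> forall i, (- x) 0 i \is Num.real.
  by move=> xr i; rewrite mxE realN.
have oppA (W : 'M[algC]_n) x :
    A = W ^t* *m diag_mx x *m W -> - A = W ^t* *m diag_mx (- x) *m W.
  by move=> ->; rewrite raddfN mulmxN mulNmx.
split; rewrite /i_minus /i_plus (count_eigvals_similar _ Pu AE).
  exact: card_neg_diag_eq Pu Vu dr er AP AV.
have := card_neg_diag_eq Pu Vu (opp_real _ dr) (opp_real _ er)
  (oppA _ _ AP) (oppA _ _ AV).
by under eq_finset do rewrite mxE oppr_lt0;
  under [in RHS]eq_finset do rewrite mxE oppr_lt0.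
Qed.

Definition pow_weight (R : pzRingType) m (x : R) t : R :=
  (t < m)%N%:R * x ^+ t - (t.+1 < m)%N%:R * x ^+ t.+1.

Lemma sum_pow_weight (R : pzRingType) m (x : R) w : (w < m)%N ->
  \sum_(t < m) (w <= t)%N%:R * pow_weight m x t = x ^+ w.
Proof.
move=> wm; rewrite -(big_mkord xpredT (fun t => (w <= t)%N%:R * pow_weight m x t)).
rewrite (big_cat_nat _ (ltnW wm)) //=.
rewrite big_nat_cond big1 ?add0r => [|t /andP[/andP[_ tw] _]]; last first.
  by rewrite leqNgt tw mul0r.
rewrite (eq_big_nat _ _ (F2 := fun t =>
  - ((t.+1 < m)%N%:R * x ^+ t.+1 - (t < m)%N%:R * x ^+ t))).
  by rewrite sumrN telescope_sumr ?(ltnW wm) // ltnn wm mul0r mul1r sub0r opprK.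
by move=> t /andP[wt _]; rewrite wt mul1r opprB.
Qed.

Lemma pow_weightE (R : pzRingType) m (x : R) t : (t < m)%N ->
  pow_weight m x t = if (t.+1 < m)%N then x ^+ t * (1 - x) else x ^+ t.
Proof.
move=> tm; rewrite /pow_weight tm mul1r; case: ifP => _; last by rewrite mul0r subr0.
by rewrite mul1r exprSr mulrBr mulr1.
Qed.

Lemma pow_weight_lt0 (R : numDomainType) m (x : R) t : 1 < x -> (t < m)%N ->
  (pow_weight m x t < 0) = (t.+1 < m)%N.
Proof.
move=> x1 tm; have xt : 0 < x ^+ t by rewrite exprn_gt0 // (lt_trans ltr01).
rewrite pow_weightE //; case: ifP => _; first by rewrite pmulr_rlt0 // subr_lt0.
by rewrite lt_gtF.
Qed.

Lemma pow_weight_neq0 (R : numDomainType) m (x : R) t : 1 < x -> (t < m)%N ->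
  pow_weight m x t != 0.
Proof.
move=> x1 tm; have xt : 0 < x ^+ t by rewrite exprn_gt0 // (lt_trans ltr01).
rewrite pow_weightE //; case: ifP => _; last by rewrite gt_eqF.
by rewrite mulf_neq0 ?(gt_eqF xt) // subr_eq0 eq_sym gt_eqF.
Qed.

Lemma pow_weight_real (R : numDomainType) m (x : R) t :
  x \is Num.real -> pow_weight m x t \is Num.real.
Proof. by move=> xr; rewrite !(rpredB, rpredM, rpredX, rpred_nat). Qed.

Lemma real_mulr_lt0 (R : numDomainType) (x y : R) :
  x \is Num.real -> y \is Num.real -> x != 0 -> y != 0 ->
  (x * y < 0) = (x < 0) (+) (y < 0).
Proof.
move=> xr yr; rewrite !real_neqr_lt ?real0 //.
case/orP=> [xn|xp]; case/orP=> [yn|yp].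
- by rewrite xn yn lt_gtF // nmulr_rgt0.
- by rewrite xn (lt_gtF yp) nmulr_rlt0.
- by rewrite yn (lt_gtF xp) pmulr_rlt0.
- by rewrite (lt_gtF xp) (lt_gtF yp) lt_gtF // pmulr_rgt0.
Qed.

(* The index r stands for the exponent pair (r %/ m, r %% m), in the order in
   which Spq lists the p ^ k * q ^ l. *)
Definition zeta_grid_mx {R : nzRingType} m n : 'M[R]_n :=
  \matrix_(r, i) ((i %/ m <= r %/ m) && (i %% m <= r %% m))%N%:R.

Definition grid_weight {R : pzRingType} m (x y : R) n : 'rV[R]_n :=
  \row_r (pow_weight m x (r %/ m) * pow_weight m y (r %% m)).

Lemma zeta_grid_mx_unit {R : comUnitRingType} m n :
  (zeta_grid_mx m n : 'M[R]_n) \in unitmx.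
Proof.
rewrite unitmxE det_trig; last first.
  apply/is_trig_mxP => r i ri; rewrite mxE; case: andP => // -[ir1 ir2].
  suff : (i <= r)%N by rewrite leqNgt ri.
  by rewrite (divn_eq i m) (divn_eq r m) leq_add ?leq_mul2r ?ir1 ?orbT.
by rewrite big1 ?unitr1 // => r _; rewrite mxE !leqnn.
Qed.

Lemma lcm_mx_Spq_factor p q m : prime p -> prime q -> p != q -> (0 < m)%N ->
  let W := zeta_grid_mx m (size (Spq p q m)) in
  lcm_mx (Spq p q m) = W ^t* *m diag_mx (grid_weight m p%:R q%:R _) *m W.
Proof.
move=> pp qp pq m0 W; apply/matrixP => i j.
have ltm (k : 'I_(size (Spq p q m))) : (k < m * m)%N by rewrite -(size_Spq p q m).
have divm (k : 'I_(size (Spq p q m))) : (k %/ m < m)%N by rewrite ltn_divLR.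
have modm (k : 'I_(size (Spq p q m))) : (k %% m < m)%N by rewrite ltn_pmod.
rewrite mul_mx_diag !mxE !nth_Spq // lcmn_pq_pow // natrM !natrX.
have Mp : (maxn (i %/ m) (j %/ m) < m)%N by rewrite gtn_max !divm.
have Mq : (maxn (i %% m) (j %% m) < m)%N by rewrite gtn_max !modm.
rewrite -(sum_pow_weight (p%:R : algC) Mp) -(sum_pow_weight (q%:R : algC) Mq).
pose F a b := (maxn (i %/ m) (j %/ m) <= a)%N%:R * pow_weight m (p%:R : algC) a *
               ((maxn (i %% m) (j %% m) <= b)%N%:R * pow_weight m (q%:R : algC) b).
rewrite big_distrlr /= -(big_nat_divmod _ m F m0) -(size_Spq p q m) big_mkord.
apply: eq_bigr => r _; rewrite /F !mxE conjC_nat !geq_max.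
by rewrite -!mulnb !natrM; ring.
Qed.

Section GridWeightSign.
Variables (R : numDomainType) (m n : nat) (x y : R).
Hypotheses (x1 : 1 < x) (y1 : 1 < y) (m0 : (0 < m)%N) (nmm : n = (m * m)%N).

Let divm (r : 'I_n) : (r %/ m < m)%N. Proof. by rewrite ltn_divLR // -nmm. Qed.
Let modm (r : 'I_n) : (r %% m < m)%N. Proof. exact: ltn_pmod. Qed.

Let xr : x \is Num.real. Proof. by rewrite gtr0_real // (lt_trans ltr01). Qed.
Let yr : y \is Num.real. Proof. by rewrite gtr0_real // (lt_trans ltr01). Qed.

Lemma grid_weight_real r : grid_weight m x y n 0 r \is Num.real.
Proof. by rewrite mxE rpredM ?pow_weight_real. Qed.

Lemma grid_weight_neq0 r : grid_weight m x y n 0 r != 0.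
Proof. by rewrite mxE mulf_neq0 ?pow_weight_neq0. Qed.

Lemma grid_weight_lt0 r :
  (grid_weight m x y n 0 r < 0) = ((r %/ m).+1 < m)%N (+) ((r %% m).+1 < m)%N.
Proof.
by rewrite mxE real_mulr_lt0 ?pow_weight_real ?pow_weight_neq0 ?pow_weight_lt0.
Qed.

Lemma card_grid_weight_lt0 : #|[set r | grid_weight m x y n 0 r < 0]| = (2 * m - 2)%N.
Proof.
pose neg r := ((r %/ m).+1 < m)%N (+) ((r %% m).+1 < m)%N.
rewrite card_set_sum (eq_bigr (fun r : 'I_n => neg r : nat)) => [|r _]; last first.
  by rewrite grid_weight_lt0.
rewrite -(big_mkord xpredT (fun r => neg r : nat)).
rewrite nmm (big_nat_divmod _ m (fun a b => (a.+1 < m)%N (+) (b.+1 < m)%N : nat) m0).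
case: m m0 => // k _.
under eq_bigr do under eq_bigr do rewrite !ltnS.
by rewrite sum_xor_ltn mulnS addKn.
Qed.

Lemma card_grid_weight_gt0 :
  #|[set r | 0 < grid_weight m x y n 0 r]| = ((m - 1) ^ 2 + 1)%N.
Proof.
have -> : [set r | 0 < grid_weight m x y n 0 r] =
          ~: [set r | grid_weight m x y n 0 r < 0].
  apply/setP => r.
  by rewrite !inE lt0r grid_weight_neq0 real_leNgt ?real0 ?grid_weight_real.
have := cardsC [set r | grid_weight m x y n 0 r < 0].
by rewrite card_grid_weight_lt0 card_ord nmm; nia.
Qed.
End GridWeightSign.

Lemma lcm_mx_herm (s : seq nat) : lcm_mx s \is hermsymmx.
Proof.
apply/is_hermitianmxP; rewrite expr0 scale1r.
by apply/matrixP => i j; rewrite !mxE lcmnC conjC_nat.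
Qed.

Theorem mainTheorem15 (p q m : nat) :
  prime p -> prime q -> p != q -> (1 < m)%N ->
  [/\ uniq (Spq p q m), size (Spq p q m) = (m * m)%N,
      i_minus (lcm_mx (Spq p q m)) = (2 * m - 2)%N
    & i_plus (lcm_mx (Spq p q m)) = ((m - 1) ^ 2 + 1)%N].
Proof.
move=> pp qp pq m1; have m0 : (0 < m)%N by apply: ltnW.
have p1 : 1 < p%:R :> algC by rewrite ltr1n prime_gt1.
have q1 : 1 < q%:R :> algC by rewrite ltr1n prime_gt1.
have [-> ->] := inertia_hermitian (lcm_mx_herm _) (zeta_grid_mx_unit _ _)
  (grid_weight_real _ p1 q1) (lcm_mx_Spq_factor pp qp pq m0).
rewrite (card_grid_weight_lt0 p1 q1 m0 (size_Spq p q m)).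
rewrite (card_grid_weight_gt0 p1 q1 m0 (size_Spq p q m)).
by split; [exact: uniq_Spq | exact: size_Spq | |].
Qed.
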